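(* Let $K$ be a field of characteristic zero, let $d\geq 2$, and let $K\langle X_d\rangle=K\langle x_1,\ldots,x_d\rangle$ be the free associative unital algebra of rank $d$ over $K$. Let $C_d$ be the cyclic group of order $d$ generated by the linear map $\rho$ with $\rho(x_1)=x_2,\ \rho(x_2)=x_3,\ \ldots,\ \rho(x_{d-1})=x_d,\ \rho(x_d)=x_1$, acting on $K\langle X_d\rangle$ by algebra automorphisms, and let $K\langle X_d\rangle^{C_d}=\{f\in K\langle X_d\rangle : \rho(f)=f\}$ be the algebra of invariants. Then: (i) The Hilbert series of $K\langle X_d\rangle^{C_d}$ is \[ H\big(K\langle X_d\rangle^{C_d},t\big)=\frac{1-(d-1)t}{1-dt}, \] and $\dim\big((K\langle X_d\rangle^{C_d})^{(n)}\big)=d^{n-1}$ for all $n\geq 1$. (ii) The generating function of a set of homogeneous free generators of the (free) algebra $K\langle X_d\rangle^{C_d}$ is \[ g(t)=\frac{t}{1-(d-1)t}, \] i.e. for each $n\geq 1$ a system of homogeneous free generators has exactly $(d-1)^{n-1}$ elements of degree $n$.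
   Context: $K\langle X_d\rangle$ is graded by total degree in $x_1,\ldots,x_d$; $(K\langle X_d\rangle^{C_d})^{(n)}$ denotes the homogeneous component of degree $n$ of the invariant algebra. The Hilbert series of a graded subalgebra $A$ is $H(A,t)=\sum_{n\geq 0}\dim A^{(n)}t^n$. The algebra of invariants $K\langle X_d\rangle^{C_d}$ is a free associative algebra (on a set of homogeneous generators), and the generating function of a set $Z$ of homogeneous free generators is $\sum_{n\geq1}|Z_n|t^n$ where $Z_n$ is the set of generators of degree $n$. *)

From HB Require Import structures.
From mathcomp Require Import all_boot all_order all_algebra.
Set Implicit Arguments. Unset Strict Implicit. Unset Printing Implicit Defensive.
Import GRing.Theory.
Local Open Scope ring_scope.

(* The free associative algebra K<x_1,...,x_d> is modelled by coefficient
   functions on words: an element is f : seq 'I_d -> K (f w = coefficient of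
   the word w), required to have finite support (nc_fin).  Letter i : 'I_d
   stands for x_{i+1}. *)

Definition ncpoly (d : nat) (K : fieldType) := seq 'I_d -> K.

Section NC.
Variables (d : nat) (K : fieldType).

Definition nc_fin (f : ncpoly d K) : Prop :=
  exists N : nat, forall w : seq 'I_d, (N <= size w)%N -> f w = 0.

Definition nc_mul (f g : ncpoly d K) : ncpoly d K :=
  fun w => \sum_(i < (size w).+1) f (take i w) * g (drop i w).

Definition nc_one : ncpoly d K := fun w => if w is [::] then 1 else 0.

Definition nc_prod (fs : seq (ncpoly d K)) : ncpoly d K := foldr nc_mul nc_one fs.

(* rho : x_i |-> x_{i+1} (indices mod d), acting letterwise on words;
   rho(f) = sum_w f(w) rho(w), so rho(f)(w) = f(rho^{-1} w). *)
Definition nc_rho (f : ncpoly d K) : ncpoly d K :=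
  fun w => f (map (@ord_pred d) w).

Definition nc_invariant (f : ncpoly d K) : Prop := forall w, nc_rho f w = f w.

Definition nc_homog (n : nat) (f : ncpoly d K) : Prop :=
  forall w : seq 'I_d, size w != n -> f w = 0.

(* A system of homogeneous generators: Z n = the list of generators of degree n.
   A monomial in the generators is indexed by a sequence of pairs (n, i),
   meaning the i-th generator of degree n. *)
Definition gen_valid (Z : nat -> seq (ncpoly d K)) (p : nat * nat) : bool :=
  (p.2 < size (Z p.1))%N.

Definition gen_mono (Z : nat -> seq (ncpoly d K)) (m : seq (nat * nat)) : ncpoly d K :=
  nc_prod [seq nth (fun _ => 0) (Z p.1) p.2 | p <- m].

Definition free_gens (Z : nat -> seq (ncpoly d K)) : Prop :=
  [/\ forall n i, (i < size (Z n))%N ->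
        nc_homog n (nth (fun _ => 0) (Z n) i) /\ nc_invariant (nth (fun _ => 0) (Z n) i),
      forall (s : seq (seq (nat * nat))) (c : seq (nat * nat) -> K),
        uniq s -> all (all (gen_valid Z)) s ->
        (forall w, \sum_(m <- s) c m * gen_mono Z m w = 0) ->
        forall m, m \in s -> c m = 0
    & forall f : ncpoly d K, nc_fin f -> nc_invariant f ->
        exists (s : seq (seq (nat * nat))) (c : seq (nat * nat) -> K),
          all (all (gen_valid Z)) s /\
          forall w, f w = \sum_(m <- s) c m * gen_mono Z m w].

(* Homogeneous component of degree n of K<X_d>: functions on words of length n,
   i.e. the vector space {ffun n.-tuple 'I_d -> K}. *)
Definition rho_minus_id (n : nat) (f : {ffun n.-tuple 'I_d -> K^o}) :
    {ffun n.-tuple 'I_d -> K^o} :=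
  [ffun w => f (map_tuple (@ord_pred d) w) - f w].

Definition inv_component (n : nat) : {vspace {ffun n.-tuple 'I_d -> K^o}} :=
  lker (linfun (@rho_minus_id n)).

Definition inv_dim (n : nat) : nat := \dim (inv_component n).

End NC.

Definition hilb_trunc (d : nat) (K : fieldType) (N : nat) : {poly int} :=
  \poly_(n < N.+1) (inv_dim d K n)%:Z.

From HB Require Import structures.
From mathcomp Require Import all_boot all_order all_algebra.
From mathcomp Require Import zify.
Set Implicit Arguments. Unset Strict Implicit. Unset Printing Implicit Defensive.
Import GRing.Theory.
Local Open Scope ring_scope.

(* Since rho moves every letter, an invariant is determined by its values on
   the words starting with x_1, i.e. by a function of the sequence of steps
   (differences mod d of consecutive letters) of a word.  For a step pattern p
   in which 0 is a wildcard, let Q_p be the sum of the words whose steps match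
   p.  Then Q_p Q_q = Q_(p 0 q), and by Moebius inversion along the wildcard
   order the Q_p form a basis of the invariants, so the invariant algebra is
   free on the Q_p with p free of wildcards: (d-1)^(n-1) generators of degree
   n.  For any system of homogeneous free generators, with a_k generators of
   degree k, the dimension c_n of the degree n component counts monomials:
   c_0 = 1 and c_n = sum_k a_k c_(n-k).  Since c_n = d^(n-1) does not depend
   on the system, neither do the a_k. *)

Section NcAlgebra.
Variables (d : nat) (K : fieldType).
Local Notation ncpoly := (ncpoly d K).

Lemma nc_mul_homogl k (f g : ncpoly) w : nc_homog k f ->
  nc_mul f g w = if (k <= size w)%N then f (take k w) * g (drop k w) else 0.
Proof.
move=> f_homog; rewrite /nc_mul (bigID (fun i : 'I_(size w).+1 => i == k :> nat)) /=.
rewrite [X in _ + X]big1 ?addr0 => [|i /negPf ik].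
  by rewrite (big_ord1_eq _ (fun i => f (take i w) * g (drop i w))) ltnS.
rewrite f_homog ?mul0r // size_take_min.
by have := ltn_ord i; rewrite ltnS => /minn_idPl ->; rewrite ik.
Qed.

Lemma nc_homog_mul p q (f g : ncpoly) : nc_homog p f -> nc_homog q g ->
  nc_homog (p + q) (nc_mul f g).
Proof.
move=> f_homog g_homog w size_w; rewrite (nc_mul_homogl _ _ f_homog).
case: ifP => // le_p_w; rewrite g_homog ?mulr0 // size_drop.
by apply: contra size_w => /eqP <-; rewrite subnKC.
Qed.

Lemma nc_homog_one : nc_homog 0 (@nc_one d K).
Proof. by case. Qed.

Lemma nc_invariant_mul (f g : ncpoly) : nc_invariant f -> nc_invariant g ->
  nc_invariant (nc_mul f g).
Proof.
move=> f_inv g_inv w; rewrite /nc_rho /nc_mul size_map.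
apply: eq_bigr => i _; rewrite -map_take -map_drop.
by have := f_inv (take i w); have := g_inv (drop i w); rewrite /nc_rho => -> ->.
Qed.

Lemma nc_invariant_one : nc_invariant (@nc_one d K).
Proof. by case. Qed.

Lemma nc_mulr1 (f : ncpoly) w : nc_mul f (@nc_one d K) w = f w.
Proof.
rewrite /nc_mul big_ord_recr /= take_size drop_size /= mulr1 big1 ?add0r // => i _.
rewrite /nc_one; case E: (drop i w) => [|? ?]; last by rewrite mulr0.
by move/eqP: E; rewrite -size_eq0 size_drop subn_eq0 leqNgt ltn_ord.
Qed.

Definition ffun_of_ncpoly n (f : ncpoly) : {ffun n.-tuple 'I_d -> K^o} :=
  [ffun t => f (val t)].

Definition ncpoly_of_ffun n (v : {ffun n.-tuple 'I_d -> K^o}) : ncpoly :=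
  fun w => if insub w is Some t then v t else 0.

Lemma ncpoly_of_ffunE n (v : {ffun n.-tuple 'I_d -> K^o}) (t : n.-tuple 'I_d) :
  ncpoly_of_ffun v (val t) = v t.
Proof. by rewrite /ncpoly_of_ffun valK. Qed.

Lemma ncpoly_of_ffun_homog n (v : {ffun n.-tuple 'I_d -> K^o}) :
  nc_homog n (ncpoly_of_ffun v).
Proof. by move=> w size_w; rewrite /ncpoly_of_ffun insubN. Qed.

Lemma nc_fin_homog n (f : ncpoly) : nc_homog n f -> nc_fin f.
Proof.
by move=> f_homog; exists n.+1 => w lt_n_w; rewrite f_homog ?neq_ltn ?lt_n_w ?orbT.
Qed.

Lemma ffun_of_ncpoly_homog k n (f : ncpoly) : nc_homog k f -> k != n ->
  ffun_of_ncpoly n f = 0.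
Proof.
by move=> f_homog neq_kn; apply/ffunP => t; rewrite !ffunE f_homog // size_tuple eq_sym.
Qed.

Fact rho_minus_id_semilinear n : semilinear (@rho_minus_id d K n).
Proof.
split=> [a f | f g]; apply/ffunP => t; rewrite !ffunE /=; first by rewrite scalerBr.
by rewrite addrACA opprD.
Qed.

HB.instance Definition _ n :=
  GRing.isSemilinear.Build K _ _ _ (@rho_minus_id d K n) (rho_minus_id_semilinear n).

Lemma mem_inv_component n v :
  (v \in inv_component d K n) = [forall t, v (map_tuple (@ord_pred d) t) == v t].
Proof.
rewrite memv_ker lfunE /=; apply/eqP/forallP => [v_inv t | v_inv].
  by move/ffunP: v_inv => /(_ t); rewrite !ffunE => /eqP; rewrite subr_eq0.
by apply/ffunP => t; rewrite !ffunE; apply/eqP; rewrite subr_eq0; apply: v_inv.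
Qed.

Lemma ffun_of_ncpoly_inv n (f : ncpoly) : nc_invariant f ->
  ffun_of_ncpoly n f \in inv_component d K n.
Proof.
move=> f_inv; rewrite mem_inv_component; apply/forallP => t.
by rewrite !ffunE -[f (val t)]f_inv.
Qed.

Lemma ncpoly_of_ffun_inv n v : v \in inv_component d K n ->
  nc_invariant (ncpoly_of_ffun v).
Proof.
rewrite mem_inv_component => /forallP v_inv w; rewrite /nc_rho.
have [size_w | size_w] := eqVneq (size w) n; last first.
  by rewrite !ncpoly_of_ffun_homog ?size_map.
have -> : w = Tuple (introT eqP size_w) by [].
by rewrite -[map _ _]/(val (map_tuple _ _)) !ncpoly_of_ffunE; apply/eqP.
Qed.

End NcAlgebra.

(* The number of monomials of degree [n] in generators of which [a k] have
   degree [k]; [f] is fuel, sufficient when [n <= f]. *)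
Fixpoint mono_count (a : nat -> nat) (f n : nat) : nat :=
  if f is f'.+1 then
    if n is n'.+1 then \sum_(k < n'.+1) a k.+1 * mono_count a f' (n' - k) else 1
  else n == 0.

Section FreeGenerators.
Variables (d : nat) (K : fieldType) (Z : nat -> seq (ncpoly d K)).
Local Notation gen n i := (nth (fun _ => 0) (Z n) i).

Definition mono_deg (m : seq (nat * nat)) : nat := sumn (map fst m).

Lemma gen_mono_homog m :
  (forall n i, (i < size (Z n))%N -> nc_homog n (gen n i)) ->
  all (gen_valid Z) m -> nc_homog (mono_deg m) (gen_mono Z m).
Proof.
move=> Z_homog; elim: m => [|p m IHm] /=; first by move=> _; apply: nc_homog_one.
by case/andP => p_valid m_valid; apply: nc_homog_mul; [apply: Z_homog | apply: IHm].
Qed.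

Lemma gen_mono_invariant m :
  (forall n i, (i < size (Z n))%N -> nc_invariant (gen n i)) ->
  all (gen_valid Z) m -> nc_invariant (gen_mono Z m).
Proof.
move=> Z_inv; elim: m => [|p m IHm] /=; first by move=> _; apply: nc_invariant_one.
by case/andP => p_valid m_valid; apply: nc_invariant_mul; [apply: Z_inv | apply: IHm].
Qed.

(* A generator of degree 0 would be a multiple of the empty monomial 1. *)
Lemma free_gens_deg0 : free_gens Z -> Z 0 = [::].
Proof.
case=> Z_gens Z_indep _; case Z0: (Z 0) => [|g gs] //; exfalso.
have [g_homog _] : nc_homog 0 g /\ nc_invariant g.
  by have := Z_gens 0%N 0%N; rewrite Z0; apply.
pose c (m : seq (nat * nat)) : K := if m is [::] then - g [::] else 1.
have valid : all (all (gen_valid Z)) [:: [:: (0%N, 0%N)]; [::]].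
  by rewrite /= /gen_valid Z0.
have rel w : \sum_(m <- [:: [:: (0%N, 0%N)]; [::]]) c m * gen_mono Z m w = 0.
  rewrite !big_cons big_nil addr0 /gen_mono /= nc_mulr1 Z0 /= mul1r /nc_one.
  by case: w => [|x w]; rewrite ?mulr1 ?addrN // mulr0 addr0 g_homog.
have := Z_indep _ c _ valid rel [:: (0%N, 0%N)].
by rewrite inE eqxx => /(_ isT isT) /eqP; rewrite oner_eq0.
Qed.

Lemma gen_valid_deg_gt0 p : Z 0 = [::] -> gen_valid Z p -> (0 < p.1)%N.
Proof. by move=> Z0; case: p => [[|k] i] //; rewrite /gen_valid /= Z0. Qed.

Lemma gen_mono_nil : gen_mono Z [::] = @nc_one d K.
Proof. by []. Qed.

Lemma gen_mono_cons p m :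
  gen_mono Z (p :: m) = nc_mul (gen p.1 p.2) (gen_mono Z m).
Proof. by []. Qed.

Definition gen_letters n : seq (nat * nat) :=
  [seq (k, i) | k <- iota 1 n, i <- iota 0 (size (Z k))].

Lemma mem_gen_letters n p :
  (p \in gen_letters n) = [&& (0 < p.1)%N, (p.1 <= n)%N & gen_valid Z p].
Proof.
case: p => k i; apply/allpairsPdep/idP => [[k' [i' [k'_n i'_k' [-> ->]]]] | ].
  by move: k'_n i'_k'; rewrite !mem_iota /gen_valid add1n ltnS => /andP[-> ->].
by case/and3P => /= k_gt0 k_le_n i_k; exists k, i; rewrite !mem_iota add1n ltnS k_gt0.
Qed.

Lemma uniq_gen_letters n : uniq (gen_letters n).
Proof.
apply: allpairs_uniq_dep => [||[k i] [k' i'] _ _ /= [-> ->]] //; first exact: iota_uniq.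
by move=> *; apply: iota_uniq.
Qed.

Fixpoint monos (f n : nat) : seq (seq (nat * nat)) :=
  if n is 0 then [:: [::]] else
  if f is f'.+1 then [seq p :: m | p <- gen_letters n, m <- monos f' (n - p.1)]
  else [::].

Lemma mem_monos0 f m : Z 0 = [::] ->
  (m \in monos f 0) = all (gen_valid Z) m && (mono_deg m == 0%N).
Proof.
move=> Z0; rewrite (_ : monos f 0 = [:: [::]]); last by case: f.
rewrite inE; case: m => [|p m] //=; apply/esym/negbTE.
rewrite negb_and; case: (boolP (gen_valid Z p)) => //= p_valid.
by rewrite /mono_deg /= -lt0n addn_gt0 (gen_valid_deg_gt0 Z0 p_valid) orbT.
Qed.

Lemma mem_monos f n m : Z 0 = [::] -> (n <= f)%N ->
  (m \in monos f n) = all (gen_valid Z) m && (mono_deg m == n).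
Proof.
move=> Z0; elim: f n m => [|f IHf] n m n_le_f.
  by move: n_le_f; rewrite leqn0 => /eqP ->; apply: mem_monos0.
case: n n_le_f => [|n] n_le_f; first exact: mem_monos0.
apply/allpairsPdep/idP => [[p [m' [p_n m'_n ->]]] | ].
  move: p_n; rewrite mem_gen_letters => /and3P[p_gt0 p_le_n p_valid].
  rewrite IHf in m'_n; last by move: (p.1) p_gt0 => k; lia.
  case/andP: m'_n => m'_valid /eqP m'_deg; rewrite /= p_valid m'_valid.
  by rewrite /mono_deg /= -/(mono_deg m') m'_deg subnKC.
case: m => [|p m] //= /andP[/andP[p_valid m_valid] m_deg].
have p_gt0 := gen_valid_deg_gt0 Z0 p_valid.
exists p, m; split => //.
  by rewrite mem_gen_letters p_valid p_gt0 -(eqP m_deg) /mono_deg leq_addr.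
have m_deg' : mono_deg m = (n.+1 - p.1)%N by rewrite -(eqP m_deg) /mono_deg /= addKn.
rewrite IHf; first by apply/andP; split; [exact: m_valid | exact/eqP].
by move: (p.1) p_gt0 n_le_f => k; lia.
Qed.

Lemma uniq_monos f n : uniq (monos f n).
Proof.
elim: f n => [|f IHf] [|n] //=; apply: allpairs_uniq_dep => //.
- exact: uniq_gen_letters.
by case=> [p m] [p' m'] _ _ /= [-> ->].
Qed.

Lemma size_monos f n : size (monos f n) = mono_count (fun k => size (Z k)) f n.
Proof.
elim: f n => [|f IHf] [|n] //=.
rewrite size_allpairs_dep sumnE big_map /gen_letters big_allpairs_dep /=.
rewrite -[1 :: _]/(iota (1 + 0) n.+1) iotaDl big_map -/(index_iota 0 n.+1) big_mkord.
apply: eq_bigr => k _; rewrite add1n big_const_seq count_predT size_iota IHf subSS.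
by elim: (size (Z k.+1)) => //= j ->; rewrite mulSn.
Qed.

Section Component.
Hypothesis Z_free : free_gens Z.
Variable n : nat.

Definition mono_components := [seq ffun_of_ncpoly n (gen_mono Z m) | m <- monos n n].

Lemma monos_valid m : m \in monos n n -> all (gen_valid Z) m.
Proof. by rewrite mem_monos ?(free_gens_deg0 Z_free) // => /andP[]. Qed.

Lemma monos_homog m : m \in monos n n -> nc_homog n (gen_mono Z m).
Proof.
case: Z_free => Z_gens _ _; rewrite mem_monos ?(free_gens_deg0 Z_free) //.
by case/andP => m_valid /eqP <-; apply: gen_mono_homog m_valid => k i /Z_gens[].
Qed.

Lemma span_mono_components : (<<mono_components>> = inv_component d K n)%VS.
Proof.
case: Z_free => Z_gens _ Z_span; apply/eqP; rewrite eqEsubv; apply/andP; split.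
  apply/span_subvP => _ /mapP[m m_n ->]; apply: ffun_of_ncpoly_inv.
  by apply: gen_mono_invariant (monos_valid m_n) => k i /Z_gens[].
apply/subvP => v v_inv.
have [s [c [s_valid f_eq]]] := Z_span _ (nc_fin_homog (ncpoly_of_ffun_homog v))
  (ncpoly_of_ffun_inv v_inv).
have -> : v = \sum_(m <- s) c m *: ffun_of_ncpoly n (gen_mono Z m).
  apply/ffunP => t; rewrite sum_ffunE -ncpoly_of_ffunE f_eq.
  by apply: eq_bigr => m _; rewrite !ffunE.
rewrite big_seq; apply: memv_suml => m m_s; apply: memvZ.
have m_valid : all (gen_valid Z) m by apply: (allP s_valid).
have [m_deg | m_deg] := eqVneq (mono_deg m) n.
  by apply/memv_span/map_f; rewrite mem_monos ?(free_gens_deg0 Z_free) ?m_valid ?m_deg /=.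
rewrite (ffun_of_ncpoly_homog _ m_deg) ?mem0v //.
by apply: gen_mono_homog m_valid => k i /Z_gens[].
Qed.

Lemma free_mono_components : free mono_components.
Proof.
case: Z_free => _ Z_indep _; have size_F : size mono_components = size (monos n n).
  by rewrite size_map.
suff : free (in_tuple mono_components) by [].
apply/freeP => k k_rel i.
pose c (m : seq (nat * nat)) := k (insubd i (index m (monos n n))).
have c_nth (j : 'I_(size mono_components)) : c (nth [::] (monos n n) j) = k j.
  rewrite /c index_uniq ?uniq_monos -?size_F //.
  by congr k; apply: val_inj; rewrite val_insubd ltn_ord.
have rel w : \sum_(m <- monos n n) c m * gen_mono Z m w = 0.
  have [size_w | size_w] := eqVneq (size w) n; last first.
    by rewrite big_seq big1 // => m m_n; rewrite monos_homog ?mulr0.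
  move/ffunP: k_rel => /(_ (Tuple (introT eqP size_w))).
  rewrite sum_ffunE ffunE; apply: etrans.
  rewrite (big_nth [::]) -size_F big_mkord; apply: eq_bigr => j _.
  by rewrite c_nth ffunE /= (nth_map [::]) -?size_F // ffunE.
have valid : all (all (gen_valid Z)) (monos n n) by apply/allP => m /monos_valid.
rewrite -c_nth; apply: Z_indep (uniq_monos _ _) valid rel _ _.
by rewrite mem_nth -?size_F.
Qed.

Lemma inv_dim_free_gens : inv_dim d K n = mono_count (fun k => size (Z k)) n n.
Proof.
move/eqP: free_mono_components.
by rewrite /inv_dim -span_mono_components => ->; rewrite size_map size_monos.
Qed.

End Component.
End FreeGenerators.

Lemma mono_count0 a f : mono_count a f 0 = 1%N.
Proof. by case: f. Qed.

Lemma eq_mono_count a b f n : (forall k, (0 < k)%N -> (k <= n)%N -> a k = b k) ->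
  mono_count a f n = mono_count b f n.
Proof.
elim: f n => [|f IHf] [|n] eq_ab //=; apply: eq_bigr => k _.
rewrite eq_ab ?ltn_ord // IHf // => j j_gt0 j_le; apply: eq_ab => //.
by move: j_le (ltn_ord k); lia.
Qed.

Lemma mono_count_inj a b : (forall n, mono_count a n n = mono_count b n n) ->
  forall k, (0 < k)%N -> a k = b k.
Proof.
move=> eq_ab k; elim/ltn_ind: k => -[|n] // IH _.
have eq_le i : (0 < i)%N -> (i <= n)%N -> a i = b i by move=> *; apply: IH.
move: (eq_ab n.+1) => /=; rewrite !big_ord_recr /= subnn !mono_count0 !muln1.
under eq_bigr => i _.
  rewrite eq_le ?ltn_ord // (@eq_mono_count a b) => [|j j_gt0 j_le].
    over.
  by apply: eq_le; rewrite // (leq_trans j_le) ?leq_subr.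
by move/addnI.
Qed.

Lemma mono_count_geometric q f n : (n <= f)%N ->
  mono_count (fun k => q ^ k.-1)%N f n = (if n is j.+1 then q.+1 ^ j else 1)%N.
Proof.
have conv m : (\sum_(k < m.+1) q ^ k * (if (m - k)%N is j.+1 then q.+1 ^ j else 1))%N
    = (q.+1 ^ m)%N.
  elim: m => [|m IHm]; first by rewrite big_ord1.
  rewrite big_ord_recl subn0 expn0 mul1n expnS mulSn -IHm big_distrr /=; congr (_ + _)%N.
  by apply: eq_bigr => k _; rewrite /bump add1n subSS expnS mulnA.
elim: f n => [|f IHf] [|n] //= n_le_f; rewrite -conv.
by apply: eq_bigr => k _; rewrite IHf // (leq_trans (leq_subr _ _)).
Qed.

Lemma mem_desc_ind (T : eqType) (s : seq T) (k : T -> nat) (P : T -> Prop) :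
  (forall x, x \in s -> (forall y, y \in s -> (k x < k y)%N -> P y) -> P x) ->
  forall x, x \in s -> P x.
Proof.
move=> IH; pose B := (\max_(y <- s) k y)%N.
suff desc t x : x \in s -> (B - k x <= t)%N -> P x.
  by move=> x x_s; apply: (desc B) => //; apply: leq_subr.
elim: t x => [|t IHt] x x_s le_t; apply: IH => // y y_s lt_xy.
all: have := @leq_bigmax_seq _ s xpredT k y y_s isT; rewrite -/B => le_yB.
  by move: le_t lt_xy le_yB; lia.
by apply: IHt => //; move: le_t lt_xy le_yB; lia.
Qed.

Fixpoint seqs_over (T : Type) (A : seq T) (k : nat) : seq (seq T) :=
  if k is k'.+1 then [seq a :: s | a <- A, s <- seqs_over A k'] else [:: [::]].

Lemma mem_seqs_over (T : eqType) (A : seq T) k s :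
  (s \in seqs_over A k) = (size s == k) && all (mem A) s.
Proof.
elim: k s => [|k IHk] s /=; first by rewrite inE; case: s.
apply/allpairsPdep/idP => [[a [t [a_A t_A ->]]] | ].
  by move: t_A; rewrite IHk /= eqSS a_A => /andP[-> ->].
case: s => [|a s] //=; rewrite eqSS => /andP[size_s /andP[a_A s_A]].
by exists a, s; rewrite IHk size_s s_A.
Qed.

Lemma uniq_seqs_over (T : eqType) (A : seq T) k : uniq A -> uniq (seqs_over A k).
Proof.
move=> A_uniq; elim: k => [|k IHk] //=.
by apply: allpairs_uniq_dep => // -[a s] [a' s'] _ _ /= [-> ->].
Qed.

Lemma size_seqs_over (T : Type) (A : seq T) k : size (seqs_over A k) = (size A ^ k)%N.
Proof.
elim: k => [|k IHk] //=; rewrite size_allpairs_dep expnS -IHk.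
by move: (size _) => c; elim: A {IHk} => //= a A ->; rewrite mulSn.
Qed.

Lemma all2_size (T1 T2 : Type) (r : T1 -> T2 -> bool) s t :
  all2 r s t -> size s = size t.
Proof. by elim: s t => [|x s IHs] [|y t] //= /andP[_ /IHs ->]. Qed.

Lemma all2_cat (T1 T2 : Type) (r : T1 -> T2 -> bool) s1 s2 t1 t2 :
  size s1 = size t1 -> all2 r (s1 ++ s2) (t1 ++ t2) = all2 r s1 t1 && all2 r s2 t2.
Proof. by elim: s1 t1 => [|x s IHs] [|y t] //= [/IHs ->]; rewrite andbA. Qed.

Lemma modn_lt_twice d a : (a < d + d)%N -> (a %% d = if a < d then a else a - d)%N.
Proof.
move=> lt_a_2d; case: ltnP => le_d_a; first by rewrite modn_small.
by rewrite -{1}(subnK le_d_a) modnDr modn_small //; move: lt_a_2d le_d_a; lia.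
Qed.

Lemma cat_zero_inj (u v r r' : seq nat) :
  all (fun a => a != 0%N) u -> all (fun a => a != 0%N) v ->
  u ++ 0%N :: r = v ++ 0%N :: r' -> u = v /\ r = r'.
Proof.
elim: u v => [|a u IHu] [|b v] //=.
- by move=> _ _ [->].
- by move=> _ /andP[/negP b_nz _] [b0]; rewrite -b0 eqxx in b_nz.
- by move=> /andP[/negP a_nz _] _ [a0]; rewrite a0 eqxx in a_nz.
by move=> /andP[_ u_nz] /andP[_ v_nz] [-> /(IHu _ u_nz v_nz)[-> ->]].
Qed.

Lemma cat_zero_neq (u v r : seq nat) : all (fun a => a != 0%N) v -> u ++ 0%N :: r <> v.
Proof. by move=> + uv; rewrite -uv all_cat /= andbF. Qed.

(* A pattern entry 0 is a wildcard; an entry a in [1, d) demands the step a. *)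
Definition step_match (a b : nat) : bool := (a == 0%N) || (a == b).

Lemma all2_step_match_refl p : all2 step_match p p.
Proof. by elim: p => //= a p ->; rewrite /step_match eqxx orbT. Qed.

Lemma all2_step_match_count p' p : all2 step_match p' p ->
  (count (pred1 0%N) p <= count (pred1 0%N) p')%N.
Proof.
elim: p' p => [|a p' IHp] [|b p] //= /andP[/orP[/eqP-> | /eqP->] /IHp le_p].
  by apply: leq_add => //; case: (b == 0%N).
exact: leq_add.
Qed.

Lemma all2_step_match_eq p' p : all2 step_match p' p ->
  (count (pred1 0%N) p' <= count (pred1 0%N) p)%N -> p' = p.
Proof.
elim: p' p => [|a p' IHp] [|b p] //= /andP[/orP[/eqP a0 | /eqP->] match_p]; last first.
  by rewrite leq_add2l => /(IHp _ match_p) ->.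
subst a; have [-> | b_nz] := eqVneq b 0%N.
  by rewrite leq_add2l => /(IHp _ match_p) ->.
by have := all2_step_match_count match_p; rewrite eqxx /=; lia.
Qed.

Section Patterns.
Variables (d : nat) (K : fieldType).
Hypothesis d_gt0 : (0 < d)%N.
Local Notation ncpoly := (ncpoly d K).

Definition step (x y : 'I_d) : nat := ((y + d - x) %% d)%N.

Lemma stepE (x y : 'I_d) :
  step x y = if (x <= y)%N then (y - x)%N else (y + d - x)%N.
Proof.
rewrite /step modn_lt_twice; last by move: (ltn_ord x) (ltn_ord y); lia.
by move: (ltn_ord x) (ltn_ord y); case: ifP; case: ifP; lia.
Qed.

Lemma step_lt (x y : 'I_d) : (step x y < d)%N.
Proof. by rewrite /step ltn_pmod // (leq_ltn_trans _ (ltn_ord x)). Qed.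

Lemma pairmap_step_lt (x : 'I_d) w : all (fun a => a < d)%N (pairmap step x w).
Proof. by elim: w x => //= y w IHw x; rewrite step_lt IHw. Qed.

Lemma val_ord_pred (x : 'I_d) :
  val (ord_pred x) = if val x == 0%N then d.-1 else (val x).-1.
Proof.
rewrite /= modn_lt_twice; last by move: (ltn_ord x); lia.
by move: (ltn_ord x); case: eqP => x0; case: ifP; lia.
Qed.

Lemma step_ord_pred (x y : 'I_d) : step (ord_pred x) (ord_pred y) = step x y.
Proof.
rewrite !stepE !val_ord_pred.
by case: x y => -[|a] a_lt [[|b] b_lt] /=; do ?[case: ifP => ?]; lia.
Qed.

Lemma pairmap_step_ord_pred (x : 'I_d) w :
  pairmap step (ord_pred x) (map (@ord_pred d) w) = pairmap step x w.
Proof. by elim: w x => //= y w IHw x; rewrite step_ord_pred IHw. Qed.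

Definition pattern_poly (p : seq nat) : ncpoly := fun w =>
  if w is x :: w' then (all2 step_match p (pairmap step x w'))%:R else 0.

Lemma pattern_poly_homog p : nc_homog (size p).+1 (pattern_poly p).
Proof.
case=> [|x w] //= size_w; case match_w: (all2 _ _ _) => //.
by move: size_w; rewrite (all2_size match_w) size_pairmap eqxx.
Qed.

Lemma pattern_poly_invariant p : nc_invariant (pattern_poly p).
Proof. by case=> [|x w] //; rewrite /nc_rho /= pairmap_step_ord_pred. Qed.

Lemma pattern_poly_mul p q w :
  nc_mul (pattern_poly p) (pattern_poly q) w = pattern_poly (p ++ 0%N :: q) w.
Proof.
rewrite (nc_mul_homogl _ _ (pattern_poly_homog (p:=p))).
case: w => [|x w] //=; rewrite ltnS; case: leqP => le_p_w; last first.
  case match_w: (all2 _ _ _) => //; move: (all2_size match_w).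
  by rewrite size_pairmap size_cat /=; move: le_p_w; lia.
rewrite -{3}(cat_take_drop (size p) w) pairmap_cat.
case E: (drop (size p) w) => [|y r] /=.
  rewrite mulr0; case match_w: (all2 _ _ _) => //; move: (all2_size match_w).
  by rewrite cats0 size_pairmap size_cat size_take_min /=; move: le_p_w; lia.
rewrite all2_cat; first by rewrite /= -natrM mulnb.
by rewrite size_pairmap size_take_min; move: le_p_w; lia.
Qed.

Definition cyc_gens (n : nat) : seq ncpoly :=
  if n is k.+1 then map pattern_poly (seqs_over (iota 1 d.-1) k) else [::].

Lemma size_cyc_gens k : size (cyc_gens k) = (if k is j.+1 then d.-1 ^ j else 0)%N.
Proof. by case: k => // j; rewrite /= size_map size_seqs_over size_iota. Qed.

Definition gen_pattern (g : nat * nat) : seq nat :=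
  nth [::] (seqs_over (iota 1 d.-1) g.1.-1) g.2.

Fixpoint mono_pattern (m : seq (nat * nat)) : seq nat :=
  if m is g :: m' then
    gen_pattern g ++ (if m' is [::] then [::] else 0%N :: mono_pattern m')
  else [::].

Lemma gen_valid_cyc g : gen_valid cyc_gens g ->
  [/\ (0 < g.1)%N, gen_pattern g \in seqs_over (iota 1 d.-1) g.1.-1
    & nth (fun _ => 0) (cyc_gens g.1) g.2 = pattern_poly (gen_pattern g)].
Proof.
case: g => [[|k] i] //; rewrite /gen_valid /= size_map => lt_i.
by rewrite /gen_pattern /= mem_nth // (nth_map [::]).
Qed.

Lemma gen_patternP g : gen_valid cyc_gens g ->
  [/\ size (gen_pattern g) = g.1.-1, all (fun a => a != 0%N) (gen_pattern g)
    & all (fun a => a < d)%N (gen_pattern g)].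
Proof.
case/gen_valid_cyc => _; rewrite mem_seqs_over => /andP[/eqP -> g_A] _.
by split => //; apply/allP => a /(allP g_A); rewrite /= mem_iota; lia.
Qed.

Lemma gen_mono_cyc m w : all (gen_valid cyc_gens) m -> m != [::] ->
  gen_mono cyc_gens m w = pattern_poly (mono_pattern m) w.
Proof.
elim: m w => [|g m IHm] // w /andP[g_valid m_valid] _.
have [_ _ gE] := gen_valid_cyc g_valid; rewrite gen_mono_cons gE.
case: m IHm m_valid => [|g' m] IHm m_valid.
  by rewrite gen_mono_nil nc_mulr1 /= cats0.
rewrite [mono_pattern _]/= -pattern_poly_mul.
by rewrite !(nc_mul_homogl _ _ (pattern_poly_homog (p:=gen_pattern g))) IHm.
Qed.

Lemma mono_pattern_zeros m : all (gen_valid cyc_gens) m -> m != [::] ->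
  count (pred1 0%N) (mono_pattern m) = (size m).-1.
Proof.
elim: m => [|g m IHm] //= /andP[g_valid m_valid] _.
have [_ g_nz _] := gen_patternP g_valid.
have g_count : count (pred1 0%N) (gen_pattern g) = 0%N.
  by rewrite (@eq_in_count _ _ pred0) ?count_pred0 // => a /(allP g_nz) /negPf.
case: m IHm m_valid => [|g' m] IHm m_valid; first by rewrite cats0 g_count.
by rewrite count_cat g_count /= IHm.
Qed.

Lemma mono_pattern_lt m : all (gen_valid cyc_gens) m ->
  all (fun a => a < d)%N (mono_pattern m).
Proof.
elim: m => [|g m IHm] //= /andP[g_valid m_valid]; have [_ _ g_lt] := gen_patternP g_valid.
by rewrite all_cat g_lt; case: m IHm m_valid => //= g' m IHm m_valid; rewrite d_gt0 IHm.
Qed.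

Lemma gen_pattern_inj g g' : gen_valid cyc_gens g -> gen_valid cyc_gens g' ->
  gen_pattern g = gen_pattern g' -> g = g'.
Proof.
move=> g_valid g'_valid eq_gg'.
have [g_gt0 _ _] := gen_valid_cyc g_valid.
have eq_deg : g.1 = g'.1.
  have [g'_gt0 _ _] := gen_valid_cyc g'_valid.
  have [size_g _ _] := gen_patternP g_valid; have [size_g' _ _] := gen_patternP g'_valid.
  have : g.1.-1 = g'.1.-1 by rewrite -size_g -size_g' eq_gg'.
  by move: (g.1) (g'.1) g_gt0 g'_gt0 => a b; lia.
move: g_valid g'_valid eq_gg' eq_deg g_gt0.
case: g g' => k i [k' i'] /= g_valid g'_valid eq_gg' eq_deg k_gt0; subst k'.
case: k k_gt0 g_valid g'_valid eq_gg' => // k _.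
rewrite /gen_valid /gen_pattern /= !size_map => lt_i lt_i' /eqP.
by rewrite nth_uniq ?uniq_seqs_over ?iota_uniq // => /eqP ->.
Qed.

Lemma mono_pattern_inj m m' :
  all (gen_valid cyc_gens) m -> all (gen_valid cyc_gens) m' ->
  m != [::] -> m' != [::] -> mono_pattern m = mono_pattern m' -> m = m'.
Proof.
elim: m m' => [|g m IHm] [|g' m'] //= /andP[g_valid m_valid] /andP[g'_valid m'_valid] _ _.
have [_ g_nz _] := gen_patternP g_valid; have [_ g'_nz _] := gen_patternP g'_valid.
case: m IHm m_valid => [|g1 m] IHm m_valid; case: m' m'_valid => [|g1' m'] m'_valid.
- by rewrite !cats0 => /(gen_pattern_inj g_valid g'_valid) ->.
- by rewrite cats0 => /esym /(cat_zero_neq g_nz).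
- by rewrite cats0 => /(cat_zero_neq g'_nz).
case/(cat_zero_inj g_nz g'_nz) => /(gen_pattern_inj g_valid g'_valid) -> eq_m.
by rewrite (IHm (g1' :: m')).
Qed.

Definition ord_mod (a : nat) : 'I_d := Ordinal (ltn_pmod a d_gt0).

Fixpoint word_of_steps (x : 'I_d) (p : seq nat) : seq 'I_d :=
  if p is a :: p' then ord_mod (x + a) :: word_of_steps (ord_mod (x + a)) p' else [::].

Lemma step_ord_mod (x : 'I_d) a : (a < d)%N -> step x (ord_mod (x + a)) = a.
Proof.
move=> lt_a; rewrite stepE /= modn_lt_twice; last by move: (ltn_ord x); lia.
by move: (ltn_ord x) => lt_x; case: (ltnP (x + a) d) => ?; case: ifP => ?; lia.
Qed.

Lemma ord_mod_step (x y : 'I_d) : ord_mod (x + step x y) = y.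
Proof.
apply: val_inj; rewrite /= stepE; have := ltn_ord x; have := ltn_ord y.
case: ifP => le_xy lt_y lt_x; first by rewrite subnKC ?modn_small.
by rewrite modn_lt_twice; [case: ifP => ?|]; lia.
Qed.

Lemma pairmap_step_word (x : 'I_d) p : all (fun a => a < d)%N p ->
  pairmap step x (word_of_steps x p) = p.
Proof. by elim: p x => //= a p IHp x /andP[lt_a lt_p]; rewrite step_ord_mod // IHp. Qed.

Lemma word_of_steps_pairmap (x : 'I_d) w : word_of_steps x (pairmap step x w) = w.
Proof. by elim: w x => //= y w IHw x; rewrite ord_mod_step IHw. Qed.

Definition canon_word (p : seq nat) : seq 'I_d :=
  ord_mod 0 :: word_of_steps (ord_mod 0) p.

Lemma pattern_poly_canon p q : all (fun a => a < d)%N q ->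
  pattern_poly p (canon_word q) = (all2 step_match p q)%:R.
Proof. by move=> lt_q; rewrite /pattern_poly /canon_word pairmap_step_word. Qed.

Lemma invariant_canon_word (f : ncpoly) : nc_invariant f ->
  forall x w, f (x :: w) = f (canon_word (pairmap step x w)).
Proof.
move=> f_inv x; move: {2}(val x) (erefl (val x)) => k; elim: k x => [|k IHk] x x_k w.
  have -> : x = ord_mod 0 by apply: val_inj; rewrite /= mod0n.
  by rewrite /canon_word word_of_steps_pairmap.
rewrite -(f_inv (x :: w)) /nc_rho /= (IHk (ord_pred x)) ?pairmap_step_ord_pred //.
by rewrite val_ord_pred x_k.
Qed.

Lemma cyc_gens_indep (s : seq (seq (nat * nat))) (c : seq (nat * nat) -> K) :
  uniq s -> all (all (gen_valid cyc_gens)) s ->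
  (forall w, \sum_(m <- s) c m * gen_mono cyc_gens m w = 0) ->
  forall m, m \in s -> c m = 0.
Proof.
move=> s_uniq s_valid rel.
(* At the canonical word of the pattern of [m] only the monomials with a
   coarser pattern survive; those with more factors (= more wildcards) have
   coefficient 0 by induction, and the others have the pattern of [m]. *)
apply: (mem_desc_ind (k := size) (P := fun m => c m = 0)) => m m_s IH.
have m_valid := allP s_valid m m_s.
have [m0 | m_nil] := eqVneq m [::].
  subst m; have := rel [::]; rewrite (bigD1_seq [::]) //= gen_mono_nil /nc_one /= mulr1.
  rewrite big1_seq ?addr0 // => m' /andP[m'_nil m'_s].
  by rewrite gen_mono_cyc ?(allP s_valid) //= mulr0.
have := rel (canon_word (mono_pattern m)).
rewrite (bigD1_seq m) //= gen_mono_cyc // pattern_poly_canon ?mono_pattern_lt //.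
rewrite all2_step_match_refl mulr1 big1_seq ?addr0 // => m' /andP[m'_m m'_s].
have m'_valid := allP s_valid m' m'_s.
have [-> | m'_nil] := eqVneq m' [::]; first by rewrite gen_mono_nil /nc_one /= mulr0.
rewrite gen_mono_cyc // pattern_poly_canon ?mono_pattern_lt //.
case match_m: (all2 step_match _ _); last by rewrite mulr0.
have [lt_m_m' | le_m'_m] := ltnP (size m) (size m'); first by rewrite IH // mul0r.
suff eq_m : m' = m by rewrite eq_m eqxx in m'_m.
apply: mono_pattern_inj => //; apply: all2_step_match_eq match_m _.
by rewrite !mono_pattern_zeros // -!subn1 leq_sub2r.
Qed.

Fixpoint mobius (F : seq nat -> K) (p : seq nat) : K :=
  if p is a :: p' then
    mobius (fun b => if a == 0%N then F (0%N :: b) else F (a :: b) - F (0%N :: b)) p'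
  else F [::].

Definition all_patterns (L : nat) : seq (seq nat) := seqs_over (iota 0 d) L.

Lemma mem_all_patterns L p :
  (p \in all_patterns L) = (size p == L) && all (fun a => a < d)%N p.
Proof. by rewrite mem_seqs_over; congr andb; apply: eq_all => a; rewrite /= mem_iota. Qed.

Lemma sum_step_match b (H : nat -> K) : (b < d)%N ->
  \sum_(a <- iota 0 d) (step_match a b)%:R * H a
    = if b == 0%N then H 0%N else H 0%N + H b.
Proof.
move=> lt_b; have -> : iota 0 d = index_iota 0 d by rewrite /index_iota subn0.
rewrite big_mkord (bigD1 (Ordinal d_gt0)) //= /step_match /= mul1r.
have [b0 | b_nz] := eqVneq b 0%N.
  rewrite big1 ?addr0 // => i; rewrite -val_eqE /= b0 orbb => /negPf ->.
  by rewrite mul0r.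
rewrite (bigD1 (Ordinal lt_b)) /= -?val_eqE //= eqxx orbT mul1r big1 ?addr0 // => i.
by case/andP; rewrite -!val_eqE /= => /negPf -> /negPf ->; rewrite mul0r.
Qed.

Lemma mobius_inversion L F b : b \in all_patterns L ->
  F b = \sum_(p <- all_patterns L) mobius F p * (all2 step_match p b)%:R.
Proof.
elim: L F b => [|L IHL] F b.
  by rewrite mem_all_patterns size_eq0 => /andP[/eqP -> _]; rewrite big_seq1 /= mulr1.
case: b => [|b0 b]; rewrite mem_all_patterns // /= eqSS.
move=> /andP[size_b /andP[lt_b0 lt_b]].
have b_L : b \in all_patterns L by rewrite mem_all_patterns size_b.
pose G a b := if a == 0%N then F (0%N :: b) else F (a :: b) - F (0%N :: b).
rewrite /all_patterns /= big_allpairs_dep /= -/(all_patterns L).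
have inner a : \sum_(p <- all_patterns L)
    mobius F (a :: p) * (step_match a b0 && all2 step_match p b)%:R
    = (step_match a b0)%:R * G a b.
  rewrite (IHL (G a) b b_L) mulr_sumr; apply: eq_bigr => p _.
  by rewrite -mulnb natrM mulrCA.
rewrite (eq_bigr _ (fun a _ => inner a)) sum_step_match // /G.
by have [-> // | _] := eqVneq b0 0%N; rewrite addrC subrK.
Qed.

(* [(1, 0)] is the generator of degree 1, with the empty pattern. *)
Fixpoint pattern_mono (p : seq nat) : seq (nat * nat) :=
  if p is a :: p' then
    if a == 0%N then (1%N, 0%N) :: pattern_mono p' else
    if pattern_mono p' is g :: m then
      (g.1.+1, index (a :: gen_pattern g) (seqs_over (iota 1 d.-1) g.1)) :: m
    else [::]
  else [:: (1%N, 0%N)].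

Lemma pattern_monoP p : all (fun a => a < d)%N p ->
  [/\ all (gen_valid cyc_gens) (pattern_mono p), pattern_mono p != [::]
    & mono_pattern (pattern_mono p) = p].
Proof.
elim: p => [|a p IHp] /=; first by rewrite /gen_valid.
case/andP => lt_a lt_p; have [m_valid m_nil m_pat] := IHp lt_p.
have [-> | a_nz] /= := eqVneq a 0%N.
  by split => //; case: (pattern_mono p) m_nil m_pat => // g m _ <-.
case: (pattern_mono p) m_valid m_nil m_pat => [|g m] // /andP[g_valid m_valid] _ m_pat.
have [g_gt0 g_mem _] := gen_valid_cyc g_valid.
have ag_mem : a :: gen_pattern g \in seqs_over (iota 1 d.-1) g.1.
  move: g_mem; rewrite !mem_seqs_over /= => /andP[/eqP -> ->].
  by rewrite prednK // eqxx andbT mem_iota; move: lt_a a_nz; lia.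
split => //; first by apply/andP; rewrite /gen_valid /= size_map index_mem.
by rewrite -m_pat /= /gen_pattern /= nth_index.
Qed.

Lemma pattern_expansion (f : ncpoly) N : nc_invariant f ->
  (forall w, (N <= size w)%N -> f w = 0) ->
  forall w, f w = f [::] * @nc_one d K w + \sum_(L <- iota 0 N)
    \sum_(p <- all_patterns L) mobius (fun b => f (canon_word b)) p * pattern_poly p w.
Proof.
move=> f_inv f_fin [|x w].
  rewrite /nc_one mulr1 big1 ?addr0 // => L _.
  by rewrite big1 // => p _; rewrite mulr0.
rewrite /nc_one mulr0 add0r /=; set F := fun b => f (canon_word b).
have other L p : p \in all_patterns L -> L != size w ->
    mobius F p * (all2 step_match p (pairmap step x w))%:R = 0.
  rewrite mem_all_patterns => /andP[/eqP <- _] size_p.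
  case match_w: (all2 _ _ _); last by rewrite mulr0.
  by move: size_p; rewrite (all2_size match_w) size_pairmap eqxx.
have [lt_w_N | le_N_w] := ltnP (size w) N; last first.
  rewrite f_fin; last exact: leqW.
  rewrite big1_seq // => L /andP[_]; rewrite mem_iota => /andP[_ lt_L_N].
  rewrite big1_seq // => p /andP[_ /other ->] //.
  by apply: contraTneq lt_L_N => ->; rewrite -leqNgt.
rewrite (bigD1_seq (size w)) ?mem_iota ?iota_uniq ?add0n ?lt_w_N //=.
rewrite [X in _ + X]big1_seq ?addr0; last first.
  by move=> L /andP[L_w _]; rewrite big1_seq // => p /andP[_ /other ->].
rewrite invariant_canon_word //; apply: mobius_inversion.
by rewrite mem_all_patterns size_pairmap eqxx pairmap_step_lt.
Qed.

Lemma cyc_gens_span (f : ncpoly) : nc_fin f -> nc_invariant f ->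
  exists (s : seq (seq (nat * nat))) (c : seq (nat * nat) -> K),
    all (all (gen_valid cyc_gens)) s /\
    forall w, f w = \sum_(m <- s) c m * gen_mono cyc_gens m w.
Proof.
move=> [N f_fin] f_inv; pose F b := f (canon_word b).
pose c (m : seq (nat * nat)) := if m is [::] then f [::] else mobius F (mono_pattern m).
exists ([::] :: flatten [seq map pattern_mono (all_patterns L) | L <- iota 0 N]), c.
split=> [|w].
  apply/allP => m; rewrite inE => /predU1P[-> //|].
  case/flattenP => _ /mapP[L _ ->] /mapP[p p_L ->].
  by move: p_L; rewrite mem_all_patterns => /andP[_ /pattern_monoP[]].
rewrite (pattern_expansion f_inv f_fin) big_cons big_flatten big_map /=; congr (_ + _).
apply: eq_bigr => L _; rewrite big_map big_seq [RHS]big_seq; apply: eq_bigr => p.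
rewrite mem_all_patterns => /andP[_ /pattern_monoP[m_valid m_nil m_pat]].
rewrite gen_mono_cyc // m_pat /c.
by case: (pattern_mono p) m_nil m_pat => // g m _ ->.
Qed.

Lemma cyc_gens_free : free_gens cyc_gens.
Proof.
split; [|exact: cyc_gens_indep|exact: cyc_gens_span].
case=> [|k] i //=; rewrite size_map => lt_i; rewrite (nth_map [::]) //.
split; last exact: pattern_poly_invariant.
have := mem_nth [::] lt_i; rewrite mem_seqs_over => /andP[/eqP size_p _].
by rewrite -[k in nc_homog k.+1]size_p; apply: pattern_poly_homog.
Qed.

End Patterns.

Lemma inv_dim_cyc d K n : (0 < d)%N ->
  inv_dim d K n = (if n is j.+1 then d ^ j else 1)%N.
Proof.
move=> d_gt0; rewrite (inv_dim_free_gens (cyc_gens_free K d_gt0)).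
have := mono_count_geometric d.-1 (leqnn n); rewrite prednK // => <-.
by apply: eq_mono_count => -[|k] // _ _; rewrite size_cyc_gens.
Qed.

Lemma free_gens_size d K (Z : nat -> seq (ncpoly d K)) : (0 < d)%N -> free_gens Z ->
  forall n, size (Z n) = (if n is 0 then 0 else d.-1 ^ n.-1)%N.
Proof.
move=> d_gt0 Z_free [|n]; first by rewrite (free_gens_deg0 Z_free).
transitivity (size (cyc_gens d K n.+1)); last by rewrite size_cyc_gens.
apply: (@mono_count_inj (fun k => size (Z k)) (fun k => size (cyc_gens d K k))) => // m.
by rewrite -!inv_dim_free_gens //; apply: cyc_gens_free.
Qed.

Lemma hilb_trunc_series d K N : (0 < d)%N ->
  take_poly N.+1 ((1 - (d%:Z)%:P * 'X) * hilb_trunc d K N)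
  = take_poly N.+1 (1 - (d%:Z - 1)%:P * 'X).
Proof.
move=> d_gt0; apply/polyP => i; rewrite !coef_take_poly; case: ifP => // lt_i.
rewrite /hilb_trunc mulrBl mul1r coefB -mulrA coefCM coefXM !coef_poly.
rewrite coefB coef1 coefCM coefX.
case: i lt_i => [|[|i]] lt_i /=; rewrite ?lt_i ?(ltnW lt_i) !inv_dim_cyc //.
- by rewrite !mulr0 !subr0.
- by rewrite expn0 mulr1; lia.
by rewrite expnS PoszM subrr mulr0 subr0.
Qed.

Unset Implicit Arguments.

Theorem theorem3p1 (K : fieldType) (d : nat) :
  [pchar K] =i pred0 -> (2 <= d)%N ->
  ((* (i) H(t) (1 - d t) = 1 - (d-1) t as formal power series,
        i.e. agreement of all truncations modulo t^(N+1) *)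
   (forall N : nat,
      take_poly N.+1 ((1 - (d%:Z)%:P * 'X) * hilb_trunc d K N)
      = take_poly N.+1 (1 - (d%:Z - 1)%:P * 'X))
   /\ (forall n : nat, (1 <= n)%N -> inv_dim d K n = (d ^ n.-1)%N))
  /\
  ((* (ii) the invariant algebra is free on homogeneous generators, and every
        system of homogeneous free generators has generating function
        t/(1-(d-1)t): none in degree 0, (d-1)^(n-1) in degree n >= 1 *)
   (exists Z : nat -> seq (ncpoly d K), free_gens Z)
   /\ (forall Z : nat -> seq (ncpoly d K), free_gens Z ->
        forall n : nat, size (Z n) = (if n is 0 then 0 else (d.-1) ^ n.-1)%N)).
Proof.
move=> _ d_ge2; have d_gt0 : (0 < d)%N by apply: ltnW.
split; split.
- by move=> N; apply: hilb_trunc_series.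
- by move=> [|n] // _; rewrite inv_dim_cyc.
- by exists (cyc_gens d K); apply: cyc_gens_free.
by move=> Z Z_free; apply: free_gens_size.
Qed.
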